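(* For every bimodal model $\mathcal{M}=\langle S,R_1,R_2,V\rangle$ there exist a serial bimodal model $\mathcal{M}'$ (both relations serial) and a surjective $\boxdot$-morphism $g$ from $\mathcal{M}'$ onto $\mathcal{M}$; consequently, for every state $x$ of $\mathcal{M}'$ and every $\phi\in\mathcal{L}(\boxdot)$, $\mathcal{M}',x\vDash\phi$ iff $\mathcal{M},g(x)\vDash\phi$, and every state of $\mathcal{M}$ is of the form $g(x)$.
   Context: Fix a nonempty set $\mathbf{P}$ of propositional variables. A bimodal model is $\langle S,R_1,R_2,V\rangle$ with $S$ nonempty, $R_1,R_2\subseteq S\times S$, $V:\mathbf{P}\to\mathcal{P}(S)$. $\mathcal{L}(\boxdot):\ \phi::=p\mid\neg\phi\mid(\phi\wedge\phi)\mid\boxdot\phi$, with $\mathcal{M},s\vDash\boxdot\phi$ iff for all $t,u$ with $sR_1t$ and $sR_2u$, ($\mathcal{M},t\vDash\phi\iff\mathcal{M},u\vDash\phi$); atoms and Booleans as usual. A function $f:S\to S'$ is a $\boxdot$-morphism from $\langle S,R_1,R_2,V\rangle$ to $\langle S',R_1',R_2',V'\rangle$ if for all $x\in S$: (Var) $x\in V(p)$ iff $f(x)\in V'(p)$ for all $p$; (Forth) for all $y,z\in S$, if $xR_1y$, $xR_2z$ and $f(y)\neq f(z)$, then $f(x)R_1'f(y)$ and $f(x)R_2'f(z)$; (Back) for all $y',z'\in S'$, if $f(x)R_1'y'$, $f(x)R_2'z'$ and $y'\neq z'$, then there are $y,z\in S$ with $xR_1y$, $xR_2z$, $f(y)=y'$,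 $f(z)=z'$. *)

From Stdlib Require Import Classical.

Set Implicit Arguments.

Record model (P : Type) (S : Type) : Type := Model {
  m_inhabited : inhabited S;
  R1 : S -> S -> Prop;
  R2 : S -> S -> Prop;
  V : P -> S -> Prop
}.

Inductive form (P : Type) : Type :=
| Var : P -> form P
| Neg : form P -> form P
| And : form P -> form P -> form P
| Bdot : form P -> form P.

Arguments Var {P} _.
Arguments Neg {P} _.
Arguments And {P} _ _.
Arguments Bdot {P} _.

Fixpoint sat {P S : Type} (M : model P S) (s : S) (phi : form P) : Prop :=
  match phi with
  | Var p => V M p s
  | Neg f => ~ sat M s f
  | And f g => sat M s f /\ sat M s g
  | Bdot f => forall t u, R1 M s t -> R2 M s u -> (sat M t f <-> sat M u f)
  end.

Definition serial {S : Type} (R : S -> S -> Prop) : Prop :=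
  forall x, exists y, R x y.

Definition serial_model {P S : Type} (M : model P S) : Prop :=
  serial (R1 M) /\ serial (R2 M).

Definition bdot_morphism {P S S' : Type} (M : model P S) (M' : model P S')
  (f : S -> S') : Prop :=
  forall x : S,
    (forall p, V M p x <-> V M' p (f x)) /\
    (forall y z, R1 M x y -> R2 M x z -> f y <> f z ->
       R1 M' (f x) (f y) /\ R2 M' (f x) (f z)) /\
    (forall y' z', R1 M' (f x) y' -> R2 M' (f x) z' -> y' <> z' ->
       exists y z, R1 M x y /\ R2 M x z /\ f y = y' /\ f z = z').

(* The proof has two independent parts.
   1. Invariance: a boxdot-morphism f from M to N preserves and reflects every
      formula, i.e. M, x |= phi iff N, f x |= phi.  By induction on phi; for
      boxdot, the Back clause transports disagreeing pairs of successors of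
      f x back to x, and the Forth clause pushes disagreeing pairs of
      successors of x forward (pairs with equal images agree trivially by the
      induction hypothesis).
   2. Serialization: call a state active when it has both an R1- and an
      R2-successor.  The serialization of M keeps the relations of M at active
      states and replaces them by a reflexive loop at the other states.  It is
      serial, and the identity map is a surjective boxdot-morphism onto M: a
      loop only produces the pair (x, x) of equal successors, which neither
      Forth nor Back constrains, while at active states nothing changes. *)

From Stdlib Require Import Classical.

Set Implicit Arguments.

Section Invariance.
Variables (P S T : Type) (M : model P S) (N : model P T) (f : S -> T).
Hypothesis f_morphism : bdot_morphism M N f.

Lemma bdot_morphism_sat (phi : form P) :
  forall x : S, sat M x phi <-> sat N (f x) phi.
Proof.
  induction phi as [p | phi IH | phi IH psi IH' | phi IH]; intro x; simpl.
  - apply (proj1 (f_morphism x)).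
  - rewrite IH; tauto.
  - rewrite IH, IH'; tauto.
  - destruct (f_morphism x) as [_ [forth back]]; split.
    + intros agree y' z' Ry' Rz'.
      destruct (classic (y' = z')) as [-> | neq]; [tauto |].
      destruct (back y' z' Ry' Rz' neq) as [y [z [Ry [Rz [<- <-]]]]].
      rewrite <- !IH; auto.
    + intros agree y z Ry Rz.
      rewrite !IH.
      destruct (classic (f y = f z)) as [-> | neq]; [tauto |].
      destruct (forth y z Ry Rz neq); auto.
Qed.

End Invariance.

Section Serialization.
Variables (P S : Type) (M : model P S).

Definition active (x : S) : Prop :=
  (exists y, R1 M x y) /\ (exists z, R2 M x z).

Definition serialize_rel (R : S -> S -> Prop) (x y : S) : Prop :=
  (active x /\ R x y) \/ (~ active x /\ y = x).

Definition serialization : model P S :=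
  Model (m_inhabited M) (serialize_rel (R1 M)) (serialize_rel (R2 M)) (V M).

Lemma serialize_rel_serial (R : S -> S -> Prop) :
  (forall x, active x -> exists y, R x y) -> serial (serialize_rel R).
Proof.
  intros R_succ x.
  destruct (classic (active x)) as [act | inact].
  - destruct (R_succ x act) as [y Ry]; exists y; left; auto.
  - exists x; right; auto.
Qed.

Lemma serialization_serial : serial_model serialization.
Proof.
  split; apply serialize_rel_serial; intros x [succ1 succ2]; assumption.
Qed.

Lemma serialization_distinct_succ {x y z : S} :
  serialize_rel (R1 M) x y -> serialize_rel (R2 M) x z -> y <> z ->
  R1 M x y /\ R2 M x z.
Proof.
  intros [[act Ry] | [inact ->]] [[act' Rz] | [inact' ->]] neq; tauto.
Qed.

Lemma serialization_keeps_succ {x y z : S} :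
  R1 M x y -> R2 M x z ->
  serialize_rel (R1 M) x y /\ serialize_rel (R2 M) x z.
Proof.
  intros Ry Rz.
  assert (act : active x) by (split; eauto).
  split; left; auto.
Qed.

Lemma serialization_morphism :
  bdot_morphism serialization M (fun x => x).
Proof.
  intro x; split; [| split]; simpl.
  - tauto.
  - intros y z; apply serialization_distinct_succ.
  - intros y z Ry Rz _; exists y, z.
    destruct (serialization_keeps_succ Ry Rz); auto.
Qed.

End Serialization.

Theorem mainTheorem10 (P : Type) (HP : inhabited P) (S : Type) (M : model P S) :
  exists (S' : Type) (M' : model P S') (g : S' -> S),
    serial_model M' /\
    bdot_morphism M' M g /\
    (forall s : S, exists x : S', g x = s) /\
    (forall (x : S') (phi : form P), sat M' x phi <-> sat M (g x) phi).
Proof.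
  exists S, (serialization M), (fun x => x).
  split; [| split; [| split]].
  - apply serialization_serial.
  - apply serialization_morphism.
  - intro s; exists s; reflexivity.
  - intros x phi; exact (bdot_morphism_sat (serialization_morphism M) phi x).
Qed.
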